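(* Let $V$ be a vector space of countably infinite dimension over a field $\mathbb{F}$, and let $u$ be an endomorphism of $V$ with no dominant eigenvalue such that $V^u$ is a torsion $\mathbb{F}[t]$-module. Then $V^u$ has a good stratification.
   Context: A scalar $\lambda$ is a dominant eigenvalue of $u$ if $\operatorname{rk}(u-\lambda\,\mathrm{id}_V)<\dim V$. $V^u$ is the $\mathbb{F}[t]$-module with underlying space $V$ and $t\cdot x:=u(x)$. A stratification of a non-zero $\mathbb{F}[t]$-module $M$ is an increasing family $(M_\alpha)_{\alpha\in D}$ of submodules indexed by a well-ordered set $D$ such that each quotient $M_\alpha/\sum_{\beta<\alpha}M_\beta$ is non-zero and monogenous (cyclic), and $M=\sum_{\alpha\in D}M_\alpha$; its dimension sequence is $n_\alpha:=\dim_{\mathbb{F}}(M_\alpha/\sum_{\beta<\alpha}M_\beta)\in\mathbb{N}^*\cup\{+\infty\}$. It is good if (a) $n_\alpha\ge 2$ whenever $\alpha$ is the minimum of $D$ or the successor of some element of $D$, and (b) $D$ has no maximum. *)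

From HB Require Import structures.
From mathcomp Require Import all_boot all_order all_algebra.
Set Implicit Arguments. Unset Strict Implicit. Unset Printing Implicit Defensive.
Import GRing.Theory.
Local Open Scope ring_scope.

Section Defs.
Variables (F : fieldType) (V : lmodType F).

Definition nat_basis (e : nat -> V) : Prop :=
  (forall (n : nat) (c : nat -> F),
      \sum_(i < n) c i *: e i = 0 -> forall i, (i < n)%N -> c i = 0)
  /\ (forall x : V, exists (n : nat) (c : nat -> F), x = \sum_(i < n) c i *: e i).

Definition countably_infinite_dim : Prop := exists e : nat -> V, nat_basis e.

Definition finite_rank (f : V -> V) : Prop :=
  exists (n : nat) (s : nat -> V),
    forall x : V, exists c : nat -> F, f x = \sum_(i < n) c i *: s i.

(** [l] is a dominant eigenvalue of [u] : rk (u - l id_V) < dim V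
    (with dim V countably infinite, this means the rank is finite). *)
Definition dominant_eigenvalue (u : V -> V) (l : F) : Prop :=
  finite_rank (fun x => u x - l *: x).

(** action of a polynomial p on V^u : p . x = p(u)(x) *)
Definition pact (u : V -> V) (p : {poly F}) (x : V) : V :=
  \sum_(i < size p) p`_i *: iter i u x.

Definition torsion (u : V -> V) : Prop :=
  forall x : V, exists p : {poly F}, p != 0 /\ pact u p x = 0.

Definition submodule (u : V -> V) (S : V -> Prop) : Prop :=
  S 0 /\ (forall x y, S x -> S y -> S (x + y))
  /\ (forall (a : F) x, S x -> S (a *: x)) /\ (forall x, S x -> S (u x)).

Definition sum_fam (D : Type) (M : D -> V -> Prop) (P : D -> Prop) (x : V) : Prop :=
  exists (n : nat) (b : nat -> D) (y : nat -> V),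
    (forall i, (i < n)%N -> P (b i) /\ M (b i) (y i)) /\ x = \sum_(i < n) y i.

Definition quot_nonzero (Q S : V -> Prop) : Prop := exists x, Q x /\ ~ S x.

Definition quot_monogenous (u : V -> V) (Q S : V -> Prop) : Prop :=
  exists g, Q g /\ forall x, Q x -> exists p : {poly F}, S (x - pact u p g).

Definition quot_dim_ge2 (Q S : V -> Prop) : Prop :=
  exists x y, Q x /\ Q y /\
    forall a b : F, S (a *: x + b *: y) -> a = 0 /\ b = 0.

End Defs.

Definition well_order (D : Type) (lt : D -> D -> Prop) : Prop :=
  (forall a, ~ lt a a) /\ (forall a b c, lt a b -> lt b c -> lt a c)
  /\ (forall a b, lt a b \/ a = b \/ lt b a) /\ well_founded lt.

Definition is_minimum (D : Type) (lt : D -> D -> Prop) (a : D) : Prop :=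
  forall b, ~ lt b a.

Definition is_successor (D : Type) (lt : D -> D -> Prop) (a : D) : Prop :=
  exists b, lt b a /\ forall c, ~ (lt b c /\ lt c a).

Section Strat.
Variables (F : fieldType) (V : lmodType F).

Definition sum_below (D : Type) (lt : D -> D -> Prop) (M : D -> V -> Prop) (a : D) :
  V -> Prop := sum_fam M (fun b => lt b a).

Definition stratification (u : V -> V) (D : Type) (lt : D -> D -> Prop)
    (M : D -> V -> Prop) : Prop :=
  well_order lt
  /\ (forall a, submodule u (M a))
  /\ (forall a b, lt a b -> forall x, M a x -> M b x)
  /\ (forall a, quot_nonzero (M a) (sum_below lt M a)
                /\ quot_monogenous u (M a) (sum_below lt M a))
  /\ (forall x : V, sum_fam M (fun _ => True) x).

Definition good_stratification (u : V -> V) (D : Type) (lt : D -> D -> Prop)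
    (M : D -> V -> Prop) : Prop :=
  stratification u lt M
  /\ (forall a, is_minimum lt a \/ is_successor lt a ->
                quot_dim_ge2 (M a) (sum_below lt M a))
  /\ (forall a, exists b, lt a b).

Definition has_good_stratification (u : V -> V) : Prop :=
  exists (D : Type) (lt : D -> D -> Prop) (M : D -> V -> Prop),
    good_stratification u lt M.
End Strat.

(* Write T_l = u - l.  A family of generators g_a indexed by a well-order
   yields a good stratification as soon as each g_a lies outside the
   submodule generated by the earlier ones and, at the minimum and at
   successors, g_a and u g_a are independent modulo that submodule.
   If T_l^2 has infinite rank for every l, every finite-dimensional
   submodule M admits such a vector: when T_l x lies in M but x does not,
   any v with T_l v outside M and T_l^2 v inside M will do.  Two successive
   choices can absorb any prescribed vector, so an omega-sequence absorbs a
   basis.  Otherwise T_mu^2 has finite rank for some mu, while T_mu has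
   infinite rank; this yields infinitely many v with T_mu^2 v = 0 whose
   images T_mu v are detected by coordinate functionals vanishing on the
   other v's and on F[t] e_m for small m.  These vectors fill the successor
   indices of omega^2, and basis vectors are inserted at limit indices. *)

From HB Require Import structures.
From mathcomp Require Import all_boot all_order all_algebra.
From Stdlib Require Import Classical ClassicalEpsilon Wf_nat.
Set Implicit Arguments. Unset Strict Implicit. Unset Printing Implicit Defensive.
Import GRing.Theory.
Local Open Scope ring_scope.

Section HistoryRecursion.
Variables (T : Type) (next : seq T -> nat -> T).

Fixpoint history n : seq T :=
  if n is n'.+1 then rcons (history n') (next (history n') n') else [::].

Definition histrec n : T := next (history n) n.

Lemma history_map n : history n = map histrec (iota 0 n).
Proof.
by elim: n => // n IH; rewrite [history _]/= -/(histrec n) IH -addn1 iotaD map_cat cats1.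
Qed.

Lemma nth_history x0 n i : (i < n)%N -> nth x0 (history n) i = histrec i.
Proof. by move=> lt_i_n; rewrite history_map (nth_map 0%N) ?size_iota // nth_iota. Qed.

End HistoryRecursion.

Lemma well_founded_ltn : well_founded (fun a b : nat => (a < b)%N).
Proof. by apply: (well_founded_lt_compat nat id) => a b /ltP. Qed.

Lemma well_order_ltn : well_order (fun a b : nat => (a < b)%N).
Proof.
split; [|split; [|split]]; last exact: well_founded_ltn.
- by move=> a; rewrite ltnn.
- by move=> a b c; apply: ltn_trans.
- by move=> a b; case: (ltngtP a b) => [_|_|->]; [left | right; right | right; left].
Qed.

Definition ltlex (a b : nat * nat) : Prop :=
  (a.1 < b.1)%N \/ (a.1 = b.1 /\ (a.2 < b.2)%N).

Lemma well_order_ltlex : well_order ltlex.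
Proof.
split; [|split; [|split]].
- by move=> [n k] [|[_]] /=; rewrite ltnn.
- move=> [n1 k1] [n2 k2] [n3 k3]; rewrite /ltlex /=.
  case=> [lt12|[-> lt12]] [lt23|[<- lt23]]; try by left.
    by left; apply: ltn_trans lt12 lt23.
  by right; split=> //; apply: ltn_trans lt12 lt23.
- move=> [n1 k1] [n2 k2]; rewrite /ltlex /=.
  case: (ltngtP n1 n2) => [_|_|<-]; [by left; left | by right; right; left |].
  by case: (ltngtP k1 k2) => [_|_|<-]; [left; right | right; right; right | right; left].
move=> [n k]; elim/(well_founded_ind well_founded_ltn): n k => n IHn k.
elim/(well_founded_ind well_founded_ltn): k => k IHk.
by constructor=> -[m j] [/IHn|[/= -> /IHk]].
Qed.

Section PolyAction.
Variables (F : fieldType) (V : lmodType F) (u : {linear V -> V}).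
Implicit Types (p q : {poly F}) (x : V).

Lemma pactE p x n : (size p <= n)%N -> pact u p x = \sum_(i < n) p`_i *: iter i u x.
Proof.
move=> le_p_n; rewrite /pact (big_ord_widen n (fun i => p`_i *: iter i u x) le_p_n).
rewrite big_mkcond; apply: eq_bigr => i _; case: ltnP => // le_p_i.
by rewrite nth_default // scale0r.
Qed.

Lemma pact0 x : pact u 0 x = 0.
Proof. by rewrite /pact size_poly0 big_ord0. Qed.

Lemma pactD p q x : pact u (p + q) x = pact u p x + pact u q x.
Proof.
rewrite (pactE _ (leq_maxl (size p) (size q))) (pactE _ (leq_maxr (size p) (size q))).
rewrite (pactE _ (size_polyD p q)) -big_split.
by apply: eq_bigr => i _; rewrite coefD scalerDl.
Qed.

Lemma pactZ a p x : pact u (a *: p) x = a *: pact u p x.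
Proof.
rewrite (pactE _ (size_scale_leq a p)) (pactE x (leqnn (size p))) scaler_sumr.
by apply: eq_bigr => i _; rewrite coefZ scalerA.
Qed.

Lemma pactC c x : pact u c%:P x = c *: x.
Proof. by rewrite (pactE _ (size_polyC_leq1 c)) big_ord1 coefC. Qed.

Lemma pact1 x : pact u 1 x = x.
Proof. by rewrite -polyC1 pactC scale1r. Qed.

Lemma pactXM p x : pact u ('X * p) x = u (pact u p x).
Proof.
have size_Xp : (size ('X * p)%R <= (size p).+1)%N.
  by have [->|p0] := eqVneq p 0; rewrite ?mulr0 ?size_poly0 // mulrC size_mulX.
rewrite (pactE _ size_Xp) big_ord_recl coefXM scale0r add0r /pact linear_sum.
by apply: eq_bigr => i _; rewrite coefXM linearZ.
Qed.

Lemma pactX x : pact u 'X x = u x.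
Proof. by rewrite -(mulr1 'X) pactXM pact1. Qed.

Lemma pactM p q x : pact u (p * q) x = pact u p (pact u q x).
Proof.
elim/poly_ind: p q x => [|p c IH] q x; first by rewrite mul0r !pact0.
by rewrite mulrDl -mulrA mul_polyC !pactD pactZ !pactC !IH pactXM pactX.
Qed.

Lemma pact_vec0 p : pact u p 0 = 0.
Proof.
rewrite /pact big1 // => i _.
have -> : iter i u 0 = 0 by elim: (i : nat) => //= n ->; rewrite linear0.
by rewrite scaler0.
Qed.

End PolyAction.

(** * Generated submodules and stratifications *)

Section SumFamily.
Variables (F : fieldType) (V : lmodType F) (D : Type).
Implicit Types (M : D -> V -> Prop) (P : D -> Prop).

Lemma sum_fam0 (d0 : D) M P : sum_fam M P 0.
Proof. by exists 0%N, (fun _ => d0), (fun _ => 0); rewrite big_ord0. Qed.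

Lemma sum_fam1 M P b y : P b -> M b y -> sum_fam M P y.
Proof. by exists 1%N, (fun _ => b), (fun _ => y); rewrite big_ord1. Qed.

Lemma sum_famD M P x y : sum_fam M P x -> sum_fam M P y -> sum_fam M P (x + y).
Proof.
move=> [n [b [z [Hz ->]]]] [m [b' [z' [Hz' ->]]]].
exists (n + m)%N, (fun i => if (i < n)%N then b i else b' (i - n)%N),
  (fun i => if (i < n)%N then z i else z' (i - n)%N); split.
  move=> i lt_i_nm; case: ltnP => le_n_i; first exact: Hz.
  by apply: Hz'; rewrite ltn_subLR.
rewrite big_split_ord; congr (_ + _); apply: eq_bigr => i _.
  by rewrite /= ltn_ord.
by rewrite /= ltnNge leq_addr addKn.
Qed.

Lemma sum_fam_ind M P (S : V -> Prop) :
    S 0 -> (forall x y, S x -> S y -> S (x + y)) ->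
    (forall b y, P b -> M b y -> S y) ->
  forall x, sum_fam M P x -> S x.
Proof.
move=> S0 SD SM x [n [b [z [Hz ->]]]]; elim: n Hz => [|n IH] Hz.
  by rewrite big_ord0.
rewrite big_ord_recr; apply: SD; first by apply: IH => i /ltnW; apply: Hz.
by have [Pb Mz] := Hz n (ltnSn n); apply: SM Mz.
Qed.

Lemma sum_fam_mono M M' P Q x :
    (forall b, P b -> Q b) -> (forall b y, P b -> M b y -> M' b y) ->
  sum_fam M P x -> sum_fam M' Q x.
Proof.
move=> PQ MM' [n [b [z [Hz ->]]]]; exists n, b, z; split => // i lt_i_n.
by have [Pb Mz] := Hz i lt_i_n; split; [apply: PQ | apply: MM'].
Qed.

Lemma sum_famZ M P a x :
  (forall b y, M b y -> M b (a *: y)) -> sum_fam M P x -> sum_fam M P (a *: x).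
Proof.
move=> MZ [n [b [z [Hz ->]]]]; exists n, b, (fun i => a *: z i).
by rewrite scaler_sumr; split=> // i /Hz [Pb Mz]; split=> //; apply: MZ.
Qed.

Lemma sum_fam_linear M P (f : {linear V -> V}) x :
  (forall b y, M b y -> M b (f y)) -> sum_fam M P x -> sum_fam M P (f x).
Proof.
move=> Mf [n [b [z [Hz ->]]]]; exists n, b, (fun i => f (z i)).
by rewrite linear_sum; split=> // i /Hz [Pb Mz]; split=> //; apply: Mf.
Qed.

End SumFamily.

Section Submodules.
Variables (F : fieldType) (V : lmodType F) (u : {linear V -> V}).
Variable S : V -> Prop.
Hypothesis subS : submodule u S.

Lemma submod0 : S 0.
Proof. by case: subS. Qed.

Lemma submodD x y : S x -> S y -> S (x + y).
Proof. by case: subS => _ [SD _]; apply: SD. Qed.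

Lemma submodZ a x : S x -> S (a *: x).
Proof. by case: subS => _ [_ [SZ _]]; apply: SZ. Qed.

Lemma submodU x : S x -> S (u x).
Proof. by case: subS => _ [_ [_ SU]]; apply: SU. Qed.

Lemma submodN x : S x -> S (- x).
Proof. by rewrite -scaleN1r; apply: submodZ. Qed.

Lemma submodB x y : S x -> S y -> S (x - y).
Proof. by move=> Sx /submodN; apply: submodD. Qed.

Lemma submod_unscale a x : a != 0 -> S (a *: x) -> S x.
Proof. by move=> a0 /(submodZ a^-1); rewrite scalerA mulVf // scale1r. Qed.

Lemma submod_sum n (f : nat -> V) : (forall i, (i < n)%N -> S (f i)) ->
  S (\sum_(i < n) f i).
Proof.
elim: n => [|n IH] Sf; first by rewrite big_ord0; apply: submod0.
by rewrite big_ord_recr; apply: submodD; [apply: IH => i /ltnW /Sf | apply: Sf].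
Qed.

Lemma submod_pact p x : S x -> S (pact u p x).
Proof.
move=> Sx; apply: (@submod_sum _ (fun i => p`_i *: iter i u x)) => i _; apply: submodZ.
by elim: i => //= i IH; apply: submodU.
Qed.

End Submodules.

Section GeneratedSubmodule.
Variables (F : fieldType) (V : lmodType F) (u : {linear V -> V}) (D : Type).
Implicit Types (g : D -> V) (P : D -> Prop).

Definition cycmod g (b : D) (y : V) : Prop := exists p, y = pact u p (g b).

Definition genmod g P : V -> Prop := sum_fam (cycmod g) P.

Lemma genmod_submod (d0 : D) g P : submodule u (genmod g P).
Proof.
split; first exact: sum_fam0.
split; first by move=> x y; apply: sum_famD.
split; first by move=> a x; apply: sum_famZ => b _ [p ->]; exists (a *: p); rewrite pactZ.
by move=> x; apply: sum_fam_linear => b _ [p ->]; exists ('X * p); rewrite pactXM.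
Qed.

Lemma genmod_gen g P b : P b -> genmod g P (g b).
Proof. by move=> Pb; apply: sum_fam1 Pb _; exists 1; rewrite pact1. Qed.

Lemma genmod_mono g P Q x : (forall b, P b -> Q b) -> genmod g P x -> genmod g Q x.
Proof. by move=> PQ; apply: sum_fam_mono. Qed.

Lemma genmod_ext g g' P x : (forall b, P b -> g b = g' b) -> genmod g P x -> genmod g' P x.
Proof. by move=> gg'; apply: sum_fam_mono => // b _ Pb [p ->]; exists p; rewrite gg'. Qed.

Lemma genmod_full_of_basis (d0 : D) g (e : nat -> V) : nat_basis e ->
  (forall j, genmod g (fun _ => True) (e j)) -> forall x, genmod g (fun _ => True) x.
Proof.
move=> [_ span_e] ge x; have [n [c ->]] := span_e x.
have subG := genmod_submod d0 g (fun _ => True).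
by apply: (submod_sum subG (f := fun i => c i *: e i)) => i _; apply: (submodZ subG).
Qed.

End GeneratedSubmodule.

Section IndepModulo.
Variables (F : fieldType) (V : lmodType F) (u : {linear V -> V}).
Implicit Types (M : V -> Prop) (x : V).

Definition indep_mod M x : Prop :=
  forall a b : F, M (a *: x + b *: u x) -> a = 0 /\ b = 0.

Lemma indep_mod_notin M x : indep_mod M x -> ~ M x.
Proof.
move=> indx Mx; have [/eqP] : (1 : F) = 0 /\ (0 : F) = 0.
  by apply: indx; rewrite scale1r scale0r addr0.
by rewrite oner_eq0.
Qed.

Lemma indep_mod_sub M M' x : (forall y, M' y -> M y) -> indep_mod M x -> indep_mod M' x.
Proof. by move=> M'M indx a b /M'M; apply: indx. Qed.

End IndepModulo.

Section StratificationOfGenerators.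
Variables (F : fieldType) (V : lmodType F) (u : {linear V -> V}).
Variables (D : Type) (lt : D -> D -> Prop) (g : D -> V).
Hypothesis wo : well_order lt.

Let below a : V -> Prop := genmod u g (fun b => lt b a).
Let upto a : V -> Prop := genmod u g (fun b => lt b a \/ b = a).

Lemma sum_below_upto a x : sum_below lt upto a x <-> below a x.
Proof.
have [_ [lt_trans _]] := wo; split.
  apply: sum_fam_ind; [exact: sum_fam0 | by move=> ??; apply: sum_famD |].
  by move=> b y ba; apply: genmod_mono => c [cb|->] //; apply: lt_trans cb ba.
by apply: sum_fam_mono => // b y ba cy; apply: sum_fam1 cy; right.
Qed.

Lemma upto_monogenous a : quot_monogenous u (upto a) (sum_below lt upto a).
Proof.
exists (g a); split; first by apply: genmod_gen; right.
apply: sum_fam_ind => [||b y [ba|->] [q ->]].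
- by exists 0; rewrite pact0 subr0; apply: sum_fam0.
- move=> x1 x2 [p1 S1] [p2 S2]; exists (p1 + p2).
  by rewrite pactD opprD addrACA; apply: sum_famD.
- exists 0; rewrite pact0 subr0; apply: sum_fam1 ba _.
  by apply: sum_fam1 (or_intror erefl) _; exists q.
- by exists q; rewrite subrr; apply: sum_fam0.
Qed.

Lemma good_stratification_of_gen :
    (forall a, exists b, lt a b) ->
    (forall a, ~ below a (g a)) ->
    (forall a, is_minimum lt a \/ is_successor lt a -> indep_mod u (below a) (g a)) ->
    (forall x, genmod u g (fun _ => True) x) ->
  has_good_stratification u.
Proof.
move=> nomax ga_notin indep cover; have [_ [lt_trans _]] := wo.
(* [D] is inhabited: a decomposition of [0] provides an index. *)
have [_ [b0 _]] := cover 0; pose d0 := b0 0%N.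
have ga a : upto a (g a) by apply: genmod_gen; right.
exists D, lt, upto; split; last split => //.
  split => //; split; first by move=> a; apply: genmod_submod.
  split.
    move=> a b ab x; apply: genmod_mono => c [ca|->]; left => //.
    exact: lt_trans ca ab.
  split; last first.
    by move=> x; apply: sum_fam_mono (cover x) => // b y _ cy; apply: sum_fam1 cy; right.
  move=> a; split; last exact: upto_monogenous.
  by exists (g a); rewrite sum_below_upto.
move=> a /indep inda; exists (g a), (u (g a)); do 2 split => //.
  exact: (submodU (genmod_submod u d0 g _) (ga a)).
by move=> x y /sum_below_upto; apply: inda.
Qed.

End StratificationOfGenerators.

Section Shift.
Variables (F : fieldType) (V : lmodType F) (u : {linear V -> V}).
Implicit Types (M : V -> Prop) (x : V).

Definition ushift (l : F) x : V := u x - l *: x.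

Fact ushift_is_linear l : linear (ushift l).
Proof.
by move=> a x y; rewrite /ushift linearP scalerBr scalerDr !scalerA mulrC addrACA opprD.
Qed.

HB.instance Definition _ l :=
  GRing.isLinear.Build F V V *:%R (ushift l) (ushift_is_linear l).

Lemma scale_u_ushift l a b x :
  a *: x + b *: u x = (a + b * l) *: x + b *: ushift l x.
Proof. by rewrite /ushift scalerBr scalerDl scalerA -addrA [(b * l) *: x + _]addrC subrK. Qed.

Lemma u_ushift l x : u x = ushift l x + l *: x.
Proof. by rewrite subrK. Qed.

Lemma submod_ushift M l x : submodule u M -> M x -> M (ushift l x).
Proof. by move=> subM Mx; apply: (submodB subM (submodU subM Mx) (submodZ subM l Mx)). Qed.

(* Applying [ushift l] to a dependence relation of [x] and [u x] modulo [M]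
   leaves a multiple of [ushift l x], which must vanish. *)
Lemma indep_mod_ushift M l x : submodule u M ->
  ~ M (ushift l x) -> M (ushift l (ushift l x)) -> indep_mod u M x.
Proof.
move=> subM Tx_notin TTx a b; rewrite (scale_u_ushift l) => Mab.
have Mc : M ((a + b * l) *: ushift l x).
  have := submodB subM (submod_ushift l subM Mab) (submodZ subM b TTx).
  by rewrite linearD !linearZ /= scalerN addrK.
have c0 : a + b * l = 0.
  by apply: NNPP => /eqP c0; apply/Tx_notin/(submod_unscale subM c0).
move: Mab; rewrite c0 scale0r add0r => Mb.
have b0 : b = 0 by apply: NNPP => /eqP b0; apply/Tx_notin/(submod_unscale subM b0).
by move: c0; rewrite b0 mul0r addr0.
Qed.

Lemma eigen_of_not_indep_mod M x : submodule u M -> ~ M x -> ~ indep_mod u M x ->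
  exists l, M (ushift l x).
Proof.
move=> subM x_notin dep.
have [a [b [Mab ab]]] : exists a b, M (a *: x + b *: u x) /\ (a != 0 \/ b != 0).
  apply: NNPP => nodep; apply: dep => a b Mab.
  by split; apply: NNPP => /eqP ?; apply: nodep; exists a, b; tauto.
have [b0|b0] := eqVneq b 0.
  move: Mab ab; rewrite b0 scale0r addr0 eqxx => Ma [a0|//].
  by case: x_notin; apply: (submod_unscale subM a0 Ma).
exists (- (a / b)); move: (submodZ subM b^-1 Mab).
by rewrite scalerDr !scalerA mulVf // scale1r /ushift scaleNr opprK addrC mulrC.
Qed.

End Shift.

Section FiniteSpan.
Variables (F : fieldType) (V : lmodType F) (u : {linear V -> V}).
Implicit Types (s t : seq V) (x y : V) (M : V -> Prop).

Definition spanL s x : Prop := exists c : nat -> F, x = \sum_(i < size s) c i *: s`_i.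

Definition finite_dim M : Prop := exists s, forall x, M x -> spanL s x.

Lemma spanL0 s : spanL s 0.
Proof. by exists (fun _ => 0); rewrite big1 // => i _; rewrite scale0r. Qed.

Lemma spanLD s x y : spanL s x -> spanL s y -> spanL s (x + y).
Proof.
move=> [c ->] [d ->]; exists (fun i => c i + d i); rewrite -big_split.
by apply: eq_bigr => i _; rewrite scalerDl.
Qed.

Lemma spanLZ s a x : spanL s x -> spanL s (a *: x).
Proof.
move=> [c ->]; exists (fun i => a * c i); rewrite scaler_sumr.
by apply: eq_bigr => i _; rewrite scalerA.
Qed.

Lemma spanL_catl s t x : spanL s x -> spanL (s ++ t) x.
Proof.
move=> [c ->]; exists (fun i => if (i < size s)%N then c i else 0).
rewrite size_cat big_split_ord [X in _ = _ + X]big1 ?addr0.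
  by apply: eq_bigr => i _; rewrite /= ltn_ord nth_cat ltn_ord.
by move=> i _; rewrite /= ltnNge leq_addr scale0r.
Qed.

Lemma spanL_catr s t x : spanL t x -> spanL (s ++ t) x.
Proof.
move=> [c ->]; exists (fun i => if (i < size s)%N then 0 else c (i - size s)%N).
rewrite size_cat big_split_ord [X in _ = X + _]big1 ?add0r.
  by apply: eq_bigr => i _; rewrite /= ltnNge leq_addr nth_cat ltnNge leq_addr addKn.
by move=> i _; rewrite /= ltn_ord scale0r.
Qed.

Lemma finite_rank_of_finite_dim M (f : V -> V) :
  finite_dim M -> (forall x, M (f x)) -> finite_rank f.
Proof.
move=> [s Ms] Mf; exists (size s), (fun i => s`_i) => x.
by have [c ->] := Ms _ (Mf x); exists c.
Qed.

(* Reducing [p] modulo an annihilator [a] of [x] bounds the degree. *)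
Lemma spanL_pact_torsion x : torsion u -> exists s, forall p, spanL s (pact u p x).
Proof.
move=> tors; have [a [a0 ax]] := tors x.
exists (mkseq (fun j => iter j u x) (size a)) => p.
have -> : pact u p x = pact u (p %% a) x.
  by rewrite {1}(divp_eq p a) pactD pactM ax pact_vec0 add0r.
exists (fun i => (p %% a)`_i); rewrite size_mkseq (pactE u x (ltnW (ltn_modpN0 p a0))).
by apply: eq_bigr => i _; rewrite nth_mkseq.
Qed.

Lemma finite_dim_genmod_ltn (g : nat -> V) k : torsion u ->
  finite_dim (genmod u g (fun b => (b < k)%N)).
Proof.
move=> tors.
have [s Hs] : exists s, forall b, (b < k)%N -> forall p, spanL s (pact u p (g b)).
  elim: k => [|k [s Hs]]; first by exists [::].
  have [t Ht] := spanL_pact_torsion (g k) tors.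
  exists (s ++ t) => b; rewrite ltnS leq_eqVlt => /orP [/eqP ->|bk] p.
    exact: spanL_catr.
  exact/spanL_catl/Hs.
exists s; apply: sum_fam_ind; [exact: spanL0 | by move=> ??; apply: spanLD |].
by move=> b y bk [p ->]; apply: Hs.
Qed.

End FiniteSpan.

(** * The case where every [T_l^2] has infinite rank *)

Section Reaching.
Variables (F : fieldType) (V : lmodType F) (u : {linear V -> V}).
Implicit Types (M : V -> Prop) (x : V).

Definition reaches M v x : Prop :=
  forall M2, submodule u M2 -> (forall y, M y -> M2 y) -> M2 v -> M2 x.

Definition reaches_in_two M g x : Prop :=
  forall M1, submodule u M1 -> finite_dim M1 -> (forall y, M y -> M1 y) -> M1 g ->
  exists2 v, indep_mod u M1 v & reaches M1 v x.

Lemma reaches_mono M M' v x :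
  (forall y, M y -> M' y) -> reaches M v x -> reaches M' v x.
Proof.
by move=> MM' rx M2 subM2 M'M2; apply: rx => // y My; apply: M'M2 (MM' _ My).
Qed.

Lemma reaches_in_two_mono M M' g x :
  (forall y, M y -> M' y) -> reaches_in_two M g x -> reaches_in_two M' g x.
Proof.
by move=> MM' rx M1 subM1 fdM1 M'M1; apply: rx => // y My; apply: M'M1 (MM' _ My).
Qed.

Local Notation T := (ushift u).

(* A dependence with a non-zero coefficient on [x + T l s] would put [x] in
   [T l V + M]. *)
Lemma indep_mod_add_shift M l x s : submodule u M -> M (T l x) ->
    ~ (exists v m, M m /\ x = T l v + m) -> ~ M (T l (T l s)) ->
  indep_mod u M (x + T l s).
Proof.
move=> subM Tx not_im TTs_notin a b.
rewrite (scale_u_ushift u l) [T l (x + _)]linearD /= => Mab.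
set c := a + b * l in Mab *.
have Mc : M (c *: (x + T l s) + b *: T l (T l s)).
  have := submodB subM Mab (submodZ subM b Tx).
  by rewrite [b *: (_ + _)]scalerDr [b *: T l x + _]addrC addrA addrK.
have c0 : c = 0.
  apply: NNPP => /eqP c0; apply: not_im.
  exists (- s - (b / c) *: T l s), (c^-1 *: (c *: (x + T l s) + b *: T l (T l s))).
  split; first exact: (submodZ subM _ Mc).
  rewrite linearB linearN linearZ scalerDr !scalerA mulVf // scale1r (mulrC c^-1).
  by rewrite addrACA addNr addr0 addrC addrK.
move: Mc; rewrite c0 scale0r add0r => Mb.
have b0 : b = 0.
  by apply: NNPP => /eqP b0; apply/TTs_notin/(submod_unscale subM b0).
by move: c0; rewrite /c b0 mul0r addr0.
Qed.

Lemma indep_reaches_shift M l x s : submodule u M ->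
    M (x + T l s) -> M (T l x) -> ~ M x ->
  indep_mod u M s /\ reaches M s x.
Proof.
move=> subM Mg Tx x_notin; split.
  apply: (indep_mod_ushift subM (l := l)).
    by move=> Ts; apply: x_notin; have := submodB subM Mg Ts; rewrite addrK.
  have := submodB subM (submod_ushift l subM Mg) Tx.
  by rewrite linearD addrC addKr.
move=> M2 subM2 MM2 M2s; have := submodB subM2 (MM2 _ Mg) (submod_ushift l subM2 M2s).
by rewrite addrK.
Qed.

End Reaching.

Section NonExceptional.
Variables (F : fieldType) (V : lmodType F) (u : {linear V -> V}).
Hypothesis shift2_infinite_rank : forall l, ~ finite_rank (ushift u l \o ushift u l).
Implicit Types (M : V -> Prop) (x : V).

Local Notation T := (ushift u).

Lemma exists_shift2_notin M l : finite_dim M -> exists s, ~ M (T l (T l s)).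
Proof.
move=> fdM; apply: NNPP => all_in; apply: (@shift2_infinite_rank l).
apply: (finite_rank_of_finite_dim fdM) => y.
by apply: NNPP => Mn; apply: all_in; exists y.
Qed.

Lemma exists_indep_mod_reaching M x : submodule u M -> finite_dim M -> ~ M x ->
  exists g, indep_mod u M g /\ forall M1, submodule u M1 -> (forall y, M y -> M1 y) ->
    M1 g -> M1 x \/ exists v, indep_mod u M1 v /\ reaches u M1 v x.
Proof.
move=> subM fdM x_notin.
case: (classic (indep_mod u M x)) => [indx|depx].
  by exists x; split=> // M1 _ _ M1x; left.
have [l Tx] := eigen_of_not_indep_mod subM x_notin depx.
case: (classic (exists v m, M m /\ x = T l v + m)) => [[v [m [Mm xE]]]|not_im].
  exists v; split; last first.
    move=> M1 subM1 MM1 M1v; left; rewrite xE.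
    exact: (submodD subM1 (submod_ushift l subM1 M1v) (MM1 _ Mm)).
  apply: (indep_mod_ushift subM (l := l)).
    by move=> Tv; apply: x_notin; rewrite xE; apply: (submodD subM).
  have -> : T l (T l v) = T l x - T l m by rewrite xE [T l (_ + m)]linearD /= addrK.
  exact: (submodB subM Tx (submod_ushift l subM Mm)).
have [s TTs] := exists_shift2_notin l fdM.
exists (x + T l s); split; first exact: indep_mod_add_shift.
move=> M1 subM1 MM1 M1g; case: (classic (M1 x)) => [|x_notin1]; first by left.
by right; exists s; apply: indep_reaches_shift M1g (MM1 _ Tx) x_notin1.
Qed.

Lemma exists_indep_mod M : submodule u M -> finite_dim M -> exists g, indep_mod u M g.
Proof.
move=> subM fdM; have [s TTs] := exists_shift2_notin 0 fdM.
have s_notin : ~ M s.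
  by move=> Ms; apply: TTs; do 2 apply: (submod_ushift 0 subM).
by have [g [indg _]] := exists_indep_mod_reaching subM fdM s_notin; exists g.
Qed.

Lemma exists_indep_reaches_in_two M x : submodule u M -> finite_dim M ->
  exists g, indep_mod u M g /\ reaches_in_two u M g x.
Proof.
move=> subM fdM.
have reach_mem M1 : submodule u M1 -> finite_dim M1 -> M1 x ->
    exists2 v, indep_mod u M1 v & reaches u M1 v x.
  move=> subM1 fdM1 M1x; have [v indv] := exists_indep_mod subM1 fdM1.
  by exists v => // M2 _ MM2 _; apply: MM2.
case: (classic (M x)) => [Mx|x_notin].
  have [g indg] := exists_indep_mod subM fdM; exists g; split=> // M1 subM1 fdM1 MM1 _.
  exact: reach_mem (MM1 _ Mx).
have [g [indg reach]] := exists_indep_mod_reaching subM fdM x_notin.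
exists g; split=> // M1 subM1 fdM1 MM1 M1g.
by have [M1x|[v [indv rv]]] := reach M1 subM1 MM1 M1g; [apply: reach_mem | exists v].
Qed.

Hypothesis tors : torsion u.
Variable e : nat -> V.
Hypothesis basis_e : nat_basis e.

(* At even steps [2j] we choose a generator from which [e j] is reached at
   step [2j+1]. *)
Definition nonexc_spec (M : V -> Prop) (k : nat) (g : V) : Prop :=
  indep_mod u M g /\
  if odd k then reaches u M g (e k./2) else reaches_in_two u M g (e k./2).

Definition nonexc_next (s : seq V) (k : nat) : V :=
  epsilon (inhabits 0) (nonexc_spec (genmod u (nth 0 s) (fun b => (b < k)%N)) k).

Local Notation gen := (histrec nonexc_next).
Local Notation below k := (genmod u gen (fun b => (b < k)%N)).

Lemma nonexc_spec_eqv M M' k g :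
  (forall y, M y <-> M' y) -> nonexc_spec M k g -> nonexc_spec M' k g.
Proof.
move=> MM' [indg rg]; split; first by apply: indep_mod_sub indg => y /MM'.
case: ifP rg => _ rg; first by apply: reaches_mono rg => y /MM'.
by apply: reaches_in_two_mono rg => y /MM'.
Qed.

Lemma nonexc_spec_gen k : nonexc_spec (below k) k (gen k).
Proof.
have from_exists j : (exists g, nonexc_spec (below j) j g) -> nonexc_spec (below j) j (gen j).
  have eqv y : genmod u (nth 0 (history nonexc_next j)) (fun b => (b < j)%N) y <-> below j y.
    by split; apply: genmod_ext => b lt_b_j; rewrite nth_history.
  move=> [g spec_g]; apply: (nonexc_spec_eqv eqv); apply: epsilon_spec.
  by exists g; apply: nonexc_spec_eqv spec_g => y; rewrite eqv.
have sub_below j : submodule u (below j) := genmod_submod u 0%N gen _.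
have fd_below j : finite_dim (below j) := finite_dim_genmod_ltn gen j tors.
have even_step j : ~~ odd j -> nonexc_spec (below j) j (gen j).
  move=> /negbTE even_j; apply: from_exists.
  have [g [indg rg]] := exists_indep_reaches_in_two (e j./2)
    (sub_below j) (fd_below j).
  by exists g; split; rewrite // even_j.
case: k => [|k]; first exact: even_step.
case odd_k: (odd k); first by apply: even_step; rewrite /= odd_k.
have [_] := even_step k (negbT odd_k); rewrite odd_k => rg.
have [v indv rv] := rg _ (sub_below k.+1) (fd_below k.+1)
  (fun y => genmod_mono (fun b => @ltnW b k)) (genmod_gen u gen (ltnSn k)).
by apply: from_exists; exists v; split; rewrite //= odd_k /= uphalf_half odd_k.
Qed.

Lemma nonexceptional_good_stratification : has_good_stratification u.
Proof.
apply: (@good_stratification_of_gen _ _ u nat (fun a b => (a < b)%N) gen).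
- exact: well_order_ltn.
- by move=> a; exists a.+1.
- by move=> a; apply: indep_mod_notin (nonexc_spec_gen a).1.
- by move=> a _; apply: (nonexc_spec_gen a).1.
apply: genmod_full_of_basis basis_e _ => //; first exact: 0%N.
move=> j; have [_] := nonexc_spec_gen j.*2.+1.
rewrite /= odd_double uphalf_double => rj.
apply: rj; first exact: genmod_submod.
  by move=> y; apply: genmod_mono.
exact: genmod_gen.
Qed.

End NonExceptional.

(** * Coordinates and the exceptional case *)

Lemma finite_codim_common_kernel (F : fieldType) (V : lmodType F)
    (fs : nat -> {scalar V}) (n : nat) :
  exists cs : seq V, forall x, exists y,
    (forall i, (i < n)%N -> fs i y = 0) /\ spanL cs (x - y).
Proof.
elim: n => [|n [cs IH]].
  by exists [::] => x; exists x; rewrite subrr; split=> //; apply: spanL0.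
case: (classic (exists y0, (forall i, (i < n)%N -> fs i y0 = 0) /\ fs n y0 <> 0));
    last first.
  move=> no_y0; exists cs => x; have [y [ker_y span_xy]] := IH x; exists y.
  split=> // i; rewrite ltnS leq_eqVlt => /orP [/eqP ->|]; last exact: ker_y.
  by apply: NNPP => fy; apply: no_y0; exists y.
move=> [y0 [ker_y0 fy0]]; exists (cs ++ [:: y0]) => x.
have [y [ker_y span_xy]] := IH x; set k := fs n y / fs n y0.
exists (y - k *: y0); split.
  move=> i; rewrite ltnS leq_eqVlt linearB linearZ /= => /orP [/eqP ->|lt_i_n].
    by rewrite /k mulfVK ?subrr //; apply/eqP.
  by rewrite ker_y0 // ker_y // mulr0 subr0.
rewrite opprB addrCA addrC; apply: spanLD; first exact: spanL_catl.
apply/spanL_catr/spanLZ; exists (fun _ => 1).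
by rewrite big_ord1 scale1r.
Qed.

Section Coordinates.
Variables (F : fieldType) (V : lmodType F) (e : nat -> V).
Hypothesis basis_e : nat_basis e.
Implicit Types (c d : nat -> F) (x y : V).

Definition trunc_coef (n : nat) c (p : nat) : F := if (p < n)%N then c p else 0.

Definition expansion x : nat * (nat -> F) :=
  epsilon (inhabits (0%N, fun _ => 0))
    (fun nc => x = \sum_(i < nc.1) nc.2 (nat_of_ord i) *: e i).

Definition coord (p : nat) x : F := trunc_coef (expansion x).1 (expansion x).2 p.

Lemma expansionE x : x = \sum_(i < (expansion x).1) (expansion x).2 i *: e i.
Proof.
rewrite /expansion; apply: (epsilon_spec (inhabits (0%N, fun _ => 0))
  (fun nc => x = \sum_(i < nc.1) nc.2 (nat_of_ord i) *: e i)).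
by have [_ span_e] := basis_e; have [n [c E]] := span_e x; exists (n, c).
Qed.

Lemma sum_basis_widen n N c : (n <= N)%N ->
  \sum_(i < n) c i *: e i = \sum_(i < N) trunc_coef n c i *: e i.
Proof.
move=> le_n_N; rewrite (big_ord_widen N (fun i => c i *: e i) le_n_N) big_mkcond.
by apply: eq_bigr => i _; rewrite /trunc_coef; case: ifP; rewrite ?scale0r.
Qed.

Lemma trunc_coef_unique n m c d : \sum_(i < n) c i *: e i = \sum_(i < m) d i *: e i ->
  forall p, trunc_coef n c p = trunc_coef m d p.
Proof.
move=> E p; have [free_e _] := basis_e; set N := maxn n m.
rewrite (sum_basis_widen c (leq_maxl n m)) (sum_basis_widen d (leq_maxr n m)) in E.
have E0 : \sum_(i < N) (trunc_coef n c i - trunc_coef m d i) *: e i = 0.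
  by rewrite -[RHS](subrr (\sum_(i < N) trunc_coef m d i *: e i)) -{1}E -sumrB;
    apply: eq_bigr => i _; rewrite scalerBl.
case: (ltnP p N) => [lt_p_N|].
  by apply/eqP; rewrite -subr_eq0 (free_e N (fun i => trunc_coef n c i - trunc_coef m d i) E0).
by rewrite geq_max /trunc_coef => /andP [le_n_p le_m_p]; rewrite !ltnNge le_n_p le_m_p.
Qed.

Lemma coordE n c p : coord p (\sum_(i < n) c i *: e i) = trunc_coef n c p.
Proof. by apply: trunc_coef_unique; rewrite -expansionE. Qed.

Fact coord_is_scalar p : scalar (coord p).
Proof.
move=> a x y; set n := (expansion x).1; set m := (expansion y).1.
set c := (expansion x).2; set d := (expansion y).2.
have -> : a *: x + y =
    \sum_(i < maxn n m) (a * trunc_coef n c i + trunc_coef m d i) *: e i.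
  rewrite {1}(expansionE x) {1}(expansionE y) -/n -/c -/m -/d.
  rewrite (sum_basis_widen c (leq_maxl n m)) (sum_basis_widen d (leq_maxr n m)).
  by rewrite scaler_sumr -big_split; apply: eq_bigr => i _; rewrite scalerDl scalerA.
rewrite (coordE _ (fun i => a * trunc_coef n c i + trunc_coef m d i)).
rewrite /coord -/n -/c -/m -/d {1}/trunc_coef.
case: ltnP => //; rewrite geq_max => /andP [le_n_p le_m_p].
by rewrite /trunc_coef !ltnNge le_n_p le_m_p mulr0 addr0.
Qed.

HB.instance Definition _ p := GRing.isLinear.Build F V F *%R (coord p) (coord_is_scalar p).

Lemma coord_eq0 x : (forall p, coord p x = 0) -> x = 0.
Proof.
move=> x0; rewrite (expansionE x) big1 // => i _.
by have := x0 i; rewrite /coord /trunc_coef ltn_ord => ->; rewrite scale0r.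
Qed.

Definition supported_below (L : nat) x : Prop := forall p, (L <= p)%N -> coord p x = 0.

Lemma supported_below_widen L L' x :
  (L <= L')%N -> supported_below L x -> supported_below L' x.
Proof. by move=> le_L_L' suppx p /(leq_trans le_L_L'); apply: suppx. Qed.

Lemma coord_expand L x : supported_below L x -> x = \sum_(p < L) coord p x *: e p.
Proof.
move=> suppx; apply/eqP; rewrite -subr_eq0; apply/eqP/coord_eq0 => q.
rewrite linearB /= coordE /trunc_coef; case: ltnP => [_|/suppx ->]; first by rewrite subrr.
by rewrite subrr.
Qed.

Lemma supported_below_seq (xs : seq V) :
  exists L, forall x, x \in xs -> supported_below L x.
Proof.
elim: xs => [|x xs [L suppL]]; first by exists 0%N.
exists (maxn (expansion x).1 L) => y; rewrite inE => /orP [/eqP ->|/suppL].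
  apply: supported_below_widen (leq_maxl _ _) _ => p le_n_p.
  by rewrite /coord /trunc_coef ltnNge le_n_p.
exact: supported_below_widen (leq_maxr _ _).
Qed.

Lemma supported_below_spanL (s : seq V) :
  exists L, forall x, spanL s x -> supported_below L x.
Proof.
have [L suppL] := supported_below_seq s.
exists L => _ [c ->] p le_L_p; rewrite linear_sum big1 // => i _.
by rewrite linearZ /= suppL ?mulr0 // mem_nth.
Qed.

(* [lex_row (pickle (n, k)) = n] by [pickleK]. *)
Definition lex_row (i : nat) : nat := (odflt (0%N, 0%N) (@unpickle (nat * nat)%type i)).1.

Section Exceptional.
Variables (u : {linear V -> V}) (mu : F).
Hypothesis shift_infinite_rank : ~ finite_rank (ushift u mu).
Hypothesis shift2_finite_rank : finite_rank (ushift u mu \o ushift u mu).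
Hypothesis tors : torsion u.

Local Notation T := (ushift u mu).

Lemma shift2_supported_below : exists K, forall x, supported_below K (T (T x)).
Proof.
have [n [s im_s]] := shift2_finite_rank.
have [L suppL] := supported_below_spanL (mkseq s n).
exists L => x; apply: suppL; have [c /= ->] := im_s x.
by exists c; rewrite size_mkseq; apply: eq_bigr => i _; rewrite nth_mkseq.
Qed.

(* Otherwise [T] would map a subspace of finite codimension, hence all of [V]
   up to finitely many vectors, into [span (e 0, ..., e (L-1))]. *)
Lemma exists_unsupported_shift (fs : nat -> {scalar V}) n L :
  exists v, (forall i, (i < n)%N -> fs i v = 0) /\ ~ supported_below L (T v).
Proof.
have [cs Hcs] := finite_codim_common_kernel fs n.
apply: NNPP => bounded; apply: shift_infinite_rank.
exists (L + size cs)%N, (fun i => if (i < L)%N then e i else T cs`_(i - L)) => x.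
have [y [ker_y [a Ha]]] := Hcs x.
have suppTy : supported_below L (T y).
  by apply: NNPP => Ty; apply: bounded; exists y.
exists (fun i => if (i < L)%N then coord i (T y) else a (i - L)%N).
rewrite -(subrK y x) linearD /= Ha linear_sum big_split_ord addrC; congr (_ + _).
  by rewrite {1}(coord_expand suppTy); apply: eq_bigr => i _; rewrite /= ltn_ord.
by apply: eq_bigr => i _; rewrite /= ltnNge leq_addr addKn linearZ.
Qed.

Lemma exists_shift_vector (ps : seq nat) L : exists v, [/\ T (T v) = 0,
  forall p, p \in ps -> coord p v = 0 /\ coord p (T v) = 0 &
  exists2 p, (L <= p)%N & coord p (T v) != 0].
Proof.
have [K suppK] := shift2_supported_below; set m := size ps.
pose fs i : {scalar V} :=
  if (i < K)%N then (coord i \o T \o T : {scalar V})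
  else if (i < K + m)%N then (coord (nth 0%N ps (i - K)) : {scalar V})
  else (coord (nth 0%N ps (i - K - m)) \o T : {scalar V}).
have [v [ker_v unsupp]] := exists_unsupported_shift fs (K + m + m) L.
exists v; split.
- apply: coord_eq0 => p; case: (ltnP p K) => [lt_p_K|]; last exact: suppK.
  by have := ker_v p; rewrite /fs lt_p_K; apply; rewrite -addnA ltn_addr.
- move=> p /(nthP 0%N) [j lt_j_m <-].
  have notK i : (K + i < K)%N = false by rewrite ltnNge leq_addr.
  split.
    have := ker_v (K + j)%N; rewrite /fs notK ltn_add2l lt_j_m addKn.
    by apply; rewrite -addnA ltn_add2l ltn_addr.
  have := ker_v (K + m + j)%N.
  rewrite /fs -addnA notK ltn_add2l [(m + j < m)%N]ltnNge leq_addr /= addKn addKn.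
  by apply; rewrite addnA ltn_add2l.
- apply: NNPP => supp; apply: unsupp => p le_L_p.
  by apply: NNPP => Tv_p; apply: supp; exists p => //; apply/eqP.
Qed.

Lemma pact_basis_supported_below r :
  exists L, forall m q, (m <= r)%N -> supported_below L (pact u q (e m)).
Proof.
elim: r => [|r [L suppL]].
  have [t span_t] := spanL_pact_torsion (e 0) tors.
  have [L suppL] := supported_below_spanL t.
  by exists L => m q; rewrite leqn0 => /eqP ->; apply: suppL.
have [t span_t] := spanL_pact_torsion (e r.+1) tors.
have [L' suppL'] := supported_below_spanL t.
exists (maxn L L') => m q; rewrite leq_eqVlt => /orP [/eqP ->|lt_m_r].
  exact: supported_below_widen (leq_maxr _ _) (suppL' _ (span_t q)).
exact: supported_below_widen (leq_maxl _ _) (suppL m q lt_m_r).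
Qed.

(* The coordinate [p] separates [T v] from the submodule generated by the
   vectors of [s] and by [e 0], ..., [e r]. *)
Definition exc_spec (r : nat) (s : seq (V * nat)) (vp : V * nat) : Prop :=
  [/\ T (T vp.1) = 0, coord vp.2 (T vp.1) != 0,
    forall w, w \in s -> [/\ coord w.2 vp.1 = 0, coord w.2 (T vp.1) = 0,
                            coord vp.2 w.1 = 0 & coord vp.2 (T w.1) = 0]
  & forall m q, (m <= r)%N -> coord vp.2 (pact u q (e m)) = 0].

Lemma exc_spec_exists r s : exists vp, exc_spec r s vp.
Proof.
have [L1 supp1] := supported_below_seq (map fst s ++ map (T \o fst) s).
have [L2 supp2] := pact_basis_supported_below r.
have [v [TTv ker_v [p le_p Tvp]]] := exists_shift_vector (map snd s) (maxn L1 L2).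
have le1 : (L1 <= p)%N := leq_trans (leq_maxl _ _) le_p.
exists (v, p); split=> //= [w sw|m q le_m_r].
  have [vw Tvw] := ker_v w.2 (map_f _ sw).
  split=> //; apply: supp1 le1; rewrite mem_cat ?map_f //.
  by rewrite (map_f (T \o fst)) ?orbT.
exact: supp2 le_m_r _ (leq_trans (leq_maxr _ _) le_p).
Qed.

Definition exc_next (s : seq (V * nat)) (i : nat) : V * nat :=
  epsilon (inhabits (0, 0%N)) (exc_spec (lex_row i) s).

Local Notation pair := (histrec exc_next).
Definition exc_vec i : V := (pair i).1.
Definition exc_coord i : nat := (pair i).2.

Lemma exc_pair_spec i : exc_spec (lex_row i) (history exc_next i) (pair i).
Proof. by rewrite /histrec /exc_next; apply: epsilon_spec; apply: exc_spec_exists. Qed.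

Lemma shift2_exc_vec i : T (T (exc_vec i)) = 0.
Proof. by have [] := exc_pair_spec i. Qed.

Lemma coord_shift_exc_vec i : coord (exc_coord i) (T (exc_vec i)) != 0.
Proof. by have [] := exc_pair_spec i. Qed.

Lemma coord_exc_vec i j : j <> i ->
  coord (exc_coord i) (exc_vec j) = 0 /\ coord (exc_coord i) (T (exc_vec j)) = 0.
Proof.
have mem_hist k l : (l < k)%N -> pair l \in history exc_next k.
  by move=> lt_l_k; rewrite history_map map_f // mem_iota.
move=> neq_ji; case: (ltngtP j i) => [lt_ji|lt_ij|eq_ji]; last by case: neq_ji.
  by have [_ _ /(_ _ (mem_hist _ _ lt_ji)) []] := exc_pair_spec i.
by have [_ _ /(_ _ (mem_hist _ _ lt_ij)) []] := exc_pair_spec j.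
Qed.

Lemma coord_exc_pact_basis i m q : (m <= lex_row i)%N ->
  coord (exc_coord i) (pact u q (e m)) = 0.
Proof. by have [_ _ _ coord_pact] := exc_pair_spec i; apply: coord_pact. Qed.

(* [F[t] v] is spanned by [v] and [T v] since [u] acts on them by
   [u v = T v + mu v] and [u (T v) = mu T v]. *)
Lemma coord_exc_pact_vec i j q : j <> i ->
  coord (exc_coord i) (pact u q (exc_vec j)) = 0.
Proof.
move=> neq_ji; have [c1 c2] := coord_exc_vec neq_ji; set v := exc_vec j.
pose Z x := exists a b, x = a *: v + b *: T v.
have subZ : submodule u Z.
  split; first by exists 0, 0; rewrite !scale0r addr0.
  split.
    move=> _ _ [a [b ->]] [a' [b' ->]]; exists (a + a'), (b + b').
    by rewrite !scalerDl addrACA.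
  split.
    by move=> k _ [a [b ->]]; exists (k * a), (k * b); rewrite scalerDr !scalerA.
  move=> _ [a [b ->]]; exists (mu * a), (a + mu * b).
  rewrite (u_ushift u mu) linearD !linearZ /= shift2_exc_vec scaler0 addr0.
  by rewrite [mu *: (_ + _)]scalerDr !scalerA [(a + _) *: _]scalerDl addrCA.
have [a [b ->]] : Z (pact u q v).
  by apply: (submod_pact subZ); exists 1, 0; rewrite scale1r scale0r addr0.
by rewrite linearD !linearZ /= c1 c2 !mulr0 addr0.
Qed.

Local Notation vec n k := (exc_vec (pickle ((n, k) : nat * nat)%type)).
Local Notation crd n k := (exc_coord (pickle ((n, k) : nat * nat)%type)).

Definition lex_gen_of (s : seq V) (b : nat * nat) : V :=
  if b.2 == 0%N then nth 0 s b.1 else vec b.1 b.2.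

(* The limit index [(n.+1, 0)] receives [e n], or a fresh exceptional vector
   when [e n] is already generated, so that its quotient is non-zero. *)
Definition limit_next (s : seq V) (n : nat) : V :=
  if n is n'.+1 then
    if excluded_middle_informative
        (genmod u (lex_gen_of s) (fun b => ltlex b (n, 0%N)) (e n'))
    then vec n 0 else e n'
  else vec 0 0.

Local Notation limit := (histrec limit_next).
Definition lex_gen (b : nat * nat) : V := if b.2 == 0%N then limit b.1 else vec b.1 b.2.

Lemma genmod_lex_gen_of n x :
  genmod u (lex_gen_of (history limit_next n)) (fun b => ltlex b (n, 0%N)) x <->
  genmod u lex_gen (fun b => ltlex b (n, 0%N)) x.
Proof.
have lt_n b : ltlex b (n, 0%N) -> (b.1 < n)%N by case=> [//|[_]]; rewrite ltn0.
split; apply: genmod_ext => b /lt_n lt_b_n;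
  by rewrite /lex_gen_of /lex_gen; case: eqP; rewrite ?nth_history.
Qed.

Lemma limit_cases n : limit n = vec n 0 \/ (0 < n)%N /\ limit n = e n.-1.
Proof.
rewrite /histrec /limit_next; case: n => [|n]; first by left.
by case: excluded_middle_informative; [left | right].
Qed.

Lemma coord_pact_lex_gen n k b q : b <> (n, k) -> (b.1 <= n)%N ->
  coord (crd n k) (pact u q (lex_gen b)) = 0.
Proof.
have pickle_neq (a : nat * nat) : a <> (n, k) -> pickle a <> pickle ((n, k) : nat * nat).
  by move=> neq_a /(pcan_inj pickleK).
move=> neq_b le_b_n; rewrite /lex_gen; case: eqP => [b2_0|_]; last first.
  by apply: coord_exc_pact_vec; apply: pickle_neq; case: b neq_b {le_b_n}.
have [->|[_ ->]] := limit_cases b.1.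
  by apply: coord_exc_pact_vec; apply: pickle_neq; case: b b2_0 neq_b {le_b_n} => ? ? /= ->.
apply: coord_exc_pact_basis; rewrite /lex_row pickleK /=.
exact: leq_trans (leq_pred _) le_b_n.
Qed.

Lemma indep_mod_lex_vec n k P : (forall b, P b -> b <> (n, k) /\ (b.1 <= n)%N) ->
  indep_mod u (genmod u lex_gen P) (vec n k).
Proof.
move=> Pb; have subG := genmod_submod u (0%N, 0%N) lex_gen P.
apply: (indep_mod_ushift subG (l := mu)).
  2: by rewrite shift2_exc_vec; apply: (submod0 subG).
move=> Tv_in; have /eqP := coord_shift_exc_vec (pickle ((n, k) : nat * nat)%type).
apply; move: Tv_in; apply: (sum_fam_ind (S := fun x => coord (crd n k) x = 0)).
- exact: linear0.
- by move=> x y x0 y0; rewrite linearD /= x0 y0 addr0.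
- by move=> b _ /Pb [neq_b le_b_n] [q ->]; apply: coord_pact_lex_gen.
Qed.

Lemma indep_mod_lex_below n k :
  indep_mod u (genmod u lex_gen (fun b => ltlex b (n, k))) (vec n k).
Proof.
apply: indep_mod_lex_vec => b lt_b; split; last by case: lt_b => [/ltnW|[-> _]].
by move=> eq_b; move: lt_b; rewrite eq_b; have [irr _] := well_order_ltlex; apply: irr.
Qed.

Lemma exceptional_good_stratification : has_good_stratification u.
Proof.
have below_gen n : ~ genmod u lex_gen (fun b => ltlex b (n, 0%N)) (limit n).
  rewrite /histrec /limit_next; case: n => [|n].
    exact/indep_mod_notin/indep_mod_lex_below.
  case: excluded_middle_informative => [ej_in|ej_notin /genmod_lex_gen_of //].
  exact/indep_mod_notin/indep_mod_lex_below.
apply: (@good_stratification_of_gen _ _ u _ ltlex lex_gen).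
- exact: well_order_ltlex.
- by move=> [n k]; exists (n, k.+1); right.
- move=> [n [|k]]; first exact: below_gen.
  exact/indep_mod_notin/indep_mod_lex_below.
- move=> [n [|k]] min_or_succ; last exact: indep_mod_lex_below.
  case: n min_or_succ => [|n] min_or_succ.
    exact: indep_mod_lex_below.
  exfalso; case: min_or_succ => [min|[[m j] [lt_mj no_between]]].
    by apply: (min (0%N, 0%N)); left.
  apply: (no_between (m, j.+1)); split; first by right.
  by case: lt_mj => [/= lt_m_n|[_ /=]]; [left | rewrite ltn0].
apply: genmod_full_of_basis basis_e _ => //; first exact: (0%N, 0%N).
move=> j; case: (classic (genmod u lex_gen (fun b => ltlex b (j.+1, 0%N)) (e j))).
  by apply: genmod_mono.
move=> ej_notin; have -> : e j = lex_gen (j.+1, 0%N).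
  rewrite /lex_gen /= /histrec /limit_next.
  case: excluded_middle_informative => [ej_in|//].
  by case: ej_notin; apply/genmod_lex_gen_of.
exact: genmod_gen.
Qed.

End Exceptional.

End Coordinates.

Unset Implicit Arguments.

Theorem proposition5 (F : fieldType) (V : lmodType F) (u : {linear V -> V}) :
  countably_infinite_dim V ->
  (forall l : F, ~ dominant_eigenvalue u l) ->
  torsion u ->
  has_good_stratification u.
Proof.
move=> [e basis_e] no_dominant tors.
case: (classic (exists mu, finite_rank (ushift u mu \o ushift u mu))).
  move=> [mu shift2_finite_rank].
  exact: (exceptional_good_stratification (u := u) basis_e (no_dominant mu)
    shift2_finite_rank tors).
move=> shift2_infinite_rank; apply: (nonexceptional_good_stratification _ tors basis_e).
by move=> l shift2_l; apply: shift2_infinite_rank; exists l.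
Qed.
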